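(* Let $\mathcal{N}$ denote the class of all networks $(X,A_X)$, where $X$ is a finite nonempty set and $A_X:X\times X\to\mathbb{R}$ satisfies $A_X(x,x')\ge 0$ for all $x,x'\in X$, with $A_X(x,x')=0$ if and only if $x=x'$ ($A_X$ need not be symmetric nor satisfy the triangle inequality). For a network $(X,A_X)$ define the unidirectional minimum chain cost $$\tilde u^{NR}_X(x,x')=\min_{C(x,x')}\ \max_{0\le i\le l-1}A_X(x_i,x_{i+1}),$$ where the minimum is over all chains $C(x,x')=[x=x_0,x_1,\dots,x_l=x']$ of nodes of $X$ from $x$ to $x'$, and set $$u^{NR}_X(x,x')=\max\big(\tilde u^{NR}_X(x,x'),\ \tilde u^{NR}_X(x',x)\big).$$ Let $\mathcal{H}^{NR}$ be the method assigning to each network $(X,A_X)$ the function $u^{NR}_X$. Then: (i) for every network $(X,A_X)\in\mathcal{N}$, $u^{NR}_X$ is an ultrametric on $X$; and (ii) $\mathcal{H}^{NR}$ satisfies the Axiom of Value (A1) and the Axiom of Transformation (A2).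
   Context: An ultrametric on a finite set $X$ is a function $u_X:X\times X\to\mathbb{R}$ that is nonnegative, symmetric ($u_X(x,x')=u_X(x',x)$), satisfies $u_X(x,x')=0$ iff $x=x'$, and satisfies the strong triangle inequality $u_X(x,x')\le\max\big(u_X(x,x''),u_X(x'',x')\big)$ for all $x,x',x''\in X$. A (hierarchical) clustering method $\mathcal{H}$ is a map assigning to every network $(X,A_X)$ an ultrametric $u_X$ on $X$ (equivalently a dendrogram on $X$). Axiom of Value (A1): for every two-node network $X=\{p,q\}$ with $A_X(p,q)=\alpha$, $A_X(q,p)=\beta$ (with $\alpha,\beta>0$), the output ultrametric satisfies $u_X(p,q)=\max(\alpha,\beta)$. Axiom of Transformation (A2): for any two networks $(X,A_X)$, $(Y,A_Y)$ and any map $\phi:X\to Y$ with $A_X(x,x')\ge A_Y(\phi(x),\phi(x'))$ for all $x,x'\in X$, the output ultrametrics $u_X=\mathcal{H}(X,A_X)$ and $u_Y=\mathcal{H}(Y,A_Y)$ satisfy $u_X(x,x')\ge u_Y(\phi(x),\phi(x'))$ for all $x,x'\in X$. *)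

From mathcomp Require Import all_boot all_order all_algebra.
From mathcomp Require Import boolp classical_sets reals.
Set Implicit Arguments. Unset Strict Implicit. Unset Printing Implicit Defensive.
Import Order.TTheory GRing.Theory Num.Theory.
Local Open Scope ring_scope.
Local Open Scope classical_set_scope.

Section Defs.
Variable R : realType.

Definition is_network (X : finType) (A : X -> X -> R) : Prop :=
  (forall x x', 0 <= A x x') /\ (forall x x', A x x' = 0 <-> x = x').

Definition is_ultrametric (X : finType) (u : X -> X -> R) : Prop :=
  [/\ (forall x x', 0 <= u x x'),
      (forall x x', u x x' = u x' x),
      (forall x x', u x x' = 0 <-> x = x') &
      (forall x x' x'', u x x' <= Num.max (u x x'') (u x'' x'))].

(* A chain [x = x_0, x_1, ..., x_l] is represented by its start x and the list
   s = [x_1; ...; x_l]; it ends at last x s.  Its cost is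
   max_{0 <= i <= l-1} A x_i x_{i+1} (the max over the empty range, i.e. for
   the trivial chain l = 0, is taken to be 0). *)
Definition chain_cost (X : finType) (A : X -> X -> R) (x : X) (s : seq X) : R :=
  \big[Num.max/0]_(c <- pairmap A x s) c.

(* Unidirectional minimum chain cost: min over all chains from x to x'
   (expressed as the infimum of the set of chain costs; the minimum is attained). *)
Definition uNR_tilde (X : finType) (A : X -> X -> R) (x x' : X) : R :=
  inf [set c | exists s : seq X, last x s = x' /\ c = chain_cost A x s].

Definition uNR (X : finType) (A : X -> X -> R) (x x' : X) : R :=
  Num.max (uNR_tilde A x x') (uNR_tilde A x' x).

End Defs.

From mathcomp Require Import all_boot all_order all_algebra.
From mathcomp Require Import boolp classical_sets reals.
Import Order.TTheory GRing.Theory Num.Theory.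
Local Open Scope ring_scope.
Local Open Scope classical_set_scope.

(* The chain costs from x to x' form a set bounded below by 0, and the costs of
   concatenated chains combine by max; so the infimum u~ is 0 on the diagonal
   and satisfies the strong triangle inequality, and symmetrising by max gives
   an ultrametric.  Every chain leaving x pays at least the cheapest edge out of
   x, which makes u~ positive off the diagonal and equal to the edge weight on
   a two-point network.  A dissimilarity-reducing map sends chains to chains
   of no larger cost, which is the Axiom of Transformation. *)

Set Implicit Arguments. Unset Strict Implicit.

Section ChainCost.
Variables (R : realType) (X : finType) (A : X -> X -> R).

Lemma chain_cost_nil x : chain_cost A x [::] = 0.
Proof. by rewrite /chain_cost big_nil. Qed.

Lemma chain_cost_cons x y s :
  chain_cost A x (y :: s) = Num.max (A x y) (chain_cost A y s).
Proof. by rewrite /chain_cost big_cons. Qed.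

Lemma chain_cost_ge0 x s : 0 <= chain_cost A x s.
Proof.
elim: s x => [|y s IHs] x; first by rewrite chain_cost_nil.
by rewrite chain_cost_cons le_max IHs orbT.
Qed.

Lemma chain_cost_cat x s1 s2 :
  chain_cost A x (s1 ++ s2) =
  Num.max (chain_cost A x s1) (chain_cost A (last x s1) s2).
Proof.
elim: s1 x => [|y s1 IHs1] x /=; last by rewrite !chain_cost_cons IHs1 maxA.
by rewrite chain_cost_nil; apply/esym/max_idPr; apply: chain_cost_ge0.
Qed.

Lemma chain_cost_ge_step_out x s :
  last x s != x -> exists2 y, y != x & A x y <= chain_cost A x s.
Proof.
elim: s => [|y s IHs] /=; first by rewrite eqxx.
rewrite chain_cost_cons; case: (eqVneq y x) => [-> /IHs [z zx Az] | yx _].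
  by exists z; rewrite // le_max Az orbT.
by exists y; rewrite // le_max lexx.
Qed.

Let chain_costs x x' :=
  [set c | exists s : seq X, last x s = x' /\ c = chain_cost A x s].

Let chain_costs_neq0 x x' : chain_costs x x' !=set0.
Proof. by exists (chain_cost A x [:: x']), [:: x']. Qed.

Let chain_costs_lbound x x' : has_lbound (chain_costs x x').
Proof. by exists 0 => _ [s [_ ->]]; apply: chain_cost_ge0. Qed.

Lemma uNR_tilde_le_chain_cost x s : uNR_tilde A x (last x s) <= chain_cost A x s.
Proof. by apply: (ge_inf (chain_costs_lbound x (last x s))); exists s. Qed.

Lemma uNR_tilde_ge x x' c :
  (forall s, last x s = x' -> c <= chain_cost A x s) -> c <= uNR_tilde A x x'.
Proof.
by move=> cle; apply: lb_le_inf (chain_costs_neq0 _ _) _ => _ [s [/cle ? ->]].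
Qed.

Lemma uNR_tilde_ge0 x x' : 0 <= uNR_tilde A x x'.
Proof. by apply: uNR_tilde_ge => s _; apply: chain_cost_ge0. Qed.

Lemma uNR_tilde_xx x : uNR_tilde A x x = 0.
Proof.
apply/eqP; rewrite eq_le uNR_tilde_ge0 andbT.
by have := uNR_tilde_le_chain_cost x [::]; rewrite chain_cost_nil.
Qed.

Lemma uNR_tilde_le_edge x x' :
  (forall y y', 0 <= A y y') -> uNR_tilde A x x' <= A x x'.
Proof.
move=> A_ge0; apply: le_trans (uNR_tilde_le_chain_cost x [:: x']) _.
by rewrite chain_cost_cons chain_cost_nil ge_max lexx A_ge0.
Qed.

Lemma uNR_tilde_ge_step_out x x' c :
  x' != x -> (forall y, y != x -> c <= A x y) -> c <= uNR_tilde A x x'.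
Proof.
move=> x'x c_le; apply: uNR_tilde_ge => s sx'.
have /chain_cost_ge_step_out[y yx Ay] : last x s != x by rewrite sx'.
exact: le_trans (c_le y yx) Ay.
Qed.

Lemma uNR_tilde_le_max x x' x'' :
  uNR_tilde A x x' <= Num.max (uNR_tilde A x x'') (uNR_tilde A x'' x').
Proof.
rewrite leNgt gt_max; apply/negP => /andP[lt1 lt2].
have [_ [s1 [s1x'' ->]] lt_s1] := inf_lt (chain_costs_neq0 _ _) lt1.
have [_ [s2 [s2x' ->]] lt_s2] := inf_lt (chain_costs_neq0 _ _) lt2.
have := uNR_tilde_le_chain_cost x (s1 ++ s2).
rewrite last_cat s1x'' s2x' chain_cost_cat s1x''; apply/negP; rewrite -ltNge.
by rewrite gt_max lt_s1 lt_s2.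
Qed.

Lemma uNR_tilde_gt0 x x' : is_network A -> x != x' -> 0 < uNR_tilde A x x'.
Proof.
move=> [A_ge0 A_eq0] xx'.
have [|m mx m_min] := @arg_minP _ R X x' (fun y => y != x) (A x).
  by rewrite eq_sym.
have Axm_gt0 : 0 < A x m.
  by rewrite lt_neqAle A_ge0 andbT eq_sym; apply: contra mx => /eqP/A_eq0 ->.
by apply: lt_le_trans Axm_gt0 (uNR_tilde_ge_step_out _ m_min); rewrite eq_sym.
Qed.

Lemma uNR_ultrametric : is_network A -> is_ultrametric (uNR A).
Proof.
move=> netA; split=> [x x' | x x' | x x' | x x' x''].
- by rewrite le_max uNR_tilde_ge0.
- by rewrite /uNR maxC.
- split=> [|->]; last by rewrite /uNR uNR_tilde_xx maxxx.
  apply: contra_eq => xx'; rewrite gt_eqF // lt_max.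
  by rewrite uNR_tilde_gt0.
- rewrite /uNR ge_max; apply/andP; split.
    apply: le_trans (uNR_tilde_le_max x x' x'') _.
    by rewrite ge_max !le_max !lexx !orbT.
  apply: le_trans (uNR_tilde_le_max x' x x'') _.
  by rewrite ge_max !le_max !lexx !orbT.
Qed.

End ChainCost.

Lemma card2_neq_eq (T : finType) (a b c : T) :
  #|T| = 2%N -> b != a -> c != a -> c = b.
Proof.
move=> T2 ba ca; have /card_le1_eqP : (#|predC1 a| <= 1)%N by rewrite cardC1 T2.
by apply; rewrite !inE.
Qed.

Lemma uNR_tilde_two_point (R : realType) (X : finType) (A : X -> X -> R) p q :
  #|X| = 2%N -> (forall x x', 0 <= A x x') -> p != q -> uNR_tilde A p q = A p q.
Proof.
move=> X2 A_ge0 pq; have qp : q != p by rewrite eq_sym.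
apply/eqP; rewrite eq_le uNR_tilde_le_edge //=.
by apply: uNR_tilde_ge_step_out => // y yp; rewrite (card2_neq_eq X2 qp yp).
Qed.

Lemma chain_cost_map (R : realType) (X Y : finType) (AX : X -> X -> R)
    (AY : Y -> Y -> R) (phi : X -> Y) :
  (forall x x', AY (phi x) (phi x') <= AX x x') ->
  forall x s, chain_cost AY (phi x) (map phi s) <= chain_cost AX x s.
Proof.
move=> phi_le x s; elim: s x => [|y s IHs] x /=; first by rewrite !chain_cost_nil.
by rewrite !chain_cost_cons ge_max !le_max phi_le IHs orbT.
Qed.

Lemma uNR_tilde_map (R : realType) (X Y : finType) (AX : X -> X -> R)
    (AY : Y -> Y -> R) (phi : X -> Y) :
  (forall x x', AY (phi x) (phi x') <= AX x x') ->
  forall x x', uNR_tilde AY (phi x) (phi x') <= uNR_tilde AX x x'.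
Proof.
move=> phi_le x x'; apply: uNR_tilde_ge => s <-.
by rewrite -(last_map phi); apply: le_trans (uNR_tilde_le_chain_cost _ _ _) _;
  apply: chain_cost_map.
Qed.

Theorem proposition2 (R : realType) :
  (* (i) u^NR_X is an ultrametric for every network in N *)
  (forall (X : finType) (A : X -> X -> R),
      (0 < #|X|)%N -> is_network A -> is_ultrametric (uNR A)) /\
  (* (ii) Axiom of Value (A1) *)
  (forall (X : finType) (A : X -> X -> R) (p q : X) (alpha beta : R),
      #|X| = 2%N -> p != q -> 0 < alpha -> 0 < beta ->
      is_network A -> A p q = alpha -> A q p = beta ->
      uNR A p q = Num.max alpha beta) /\
  (* (ii) Axiom of Transformation (A2) *)
  (forall (X Y : finType) (AX : X -> X -> R) (AY : Y -> Y -> R) (phi : X -> Y),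
      (0 < #|X|)%N -> (0 < #|Y|)%N -> is_network AX -> is_network AY ->
      (forall x x', AY (phi x) (phi x') <= AX x x') ->
      forall x x', uNR AY (phi x) (phi x') <= uNR AX x x').
Proof.
split; [|split].
- by move=> X A _; apply: uNR_ultrametric.
- move=> X A p q alpha beta X2 pq _ _ [A_ge0 _] <- <-.
  by rewrite /uNR !uNR_tilde_two_point // eq_sym.
- move=> X Y AX AY phi _ _ _ _ phi_le x x'.
  by rewrite /uNR ge_max !le_max !uNR_tilde_map ?orbT.
Qed.
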